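(* Let $n\ge 3$ and $m\ge 1$ be integers, and let $Q_{n,1},\dots,Q_{n,m}$ be the partition of $\{0,1,\dots,m+1\}^n$ defined below. Then for every $1\le i<j\le m$, $Q_{n,i}$ and $Q_{n,j}$ are adjacent (the partition is internally adjacent).
   Context: Define $f:\{0,\dots,m+1\}^3\to\{1,\dots,m\}$ by: $f(x,y,z)=y$ if $0\le x\le m$, $1\le y\le m$, $z=0$; $f=x$ if $1\le x\le m$, $0\le y\le m$, $z=m+1$; $f=y$ if $x=0$, $1\le y\le m$, $1\le z\le m$; $f=x$ if $1\le x\le m$, $y=0$, $1\le z\le m$; $f=z$ if $1\le x\le m+1$, $1\le y\le m+1$, $1\le z\le m$; and $f=1$ at all remaining points. Let $f_3=f$ and for $n\ge4$: $f_n(x_1,\dots,x_n)=f_{n-1}(x_1,x_2,x_3,\dots,x_{n-1})$ if $0\le x_n\le m$, and $f_n(x_1,\dots,x_n)=f_{n-1}(m+1-x_2,x_1,x_3,\dots,x_{n-1})$ if $x_n=m+1$. Let $Q_{n,i}=\{x\in\{0,\dots,m+1\}^n: f_n(x)=i\}$. Two disjoint sets $P,Q\subset\mathbb{Z}^n$ are adjacent if there exist $p\in P$, $q\in Q$ and a unit vector $v$ parallel to a coordinate axis with $p+v=q$. *)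

From mathcomp Require Import all_boot.
Set Implicit Arguments. Unset Strict Implicit. Unset Printing Implicit Defensive.

(* The base function f : {0..m+1}^3 -> {1..m}; the five defining cases are
   pairwise disjoint, so the order of the tests is irrelevant. *)
Definition f3 (m x y z : nat) : nat :=
  if [&& x <= m, 1 <= y <= m & z == 0] then y
  else if [&& 1 <= x <= m, y <= m & z == m.+1] then x
  else if [&& x == 0, 1 <= y <= m & 1 <= z <= m] then y
  else if [&& 1 <= x <= m, y == 0 & 1 <= z <= m] then x
  else if [&& 1 <= x <= m.+1, 1 <= y <= m.+1 & 1 <= z <= m] then z
  else 1.

(* f_n on a point given as a function of 0-based coordinates:
   paper coordinate x_k is [x (k-1)].  For n <= 3 this is f_3. *)
Fixpoint fn (m n : nat) (x : nat -> nat) {struct n} : nat :=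
  match n with
  | 0 | 1 | 2 | 3 => f3 m (x 0) (x 1) (x 2)
  | n'.+1 =>
      if x n' <= m then fn m n' x
      else fn m n' (fun k => if k == 0 then m.+1 - x 1
                             else if k == 1 then x 0 else x k)
  end.

Definition in_box (m : nat) {n : nat} (p : n.-tuple nat) : Prop :=
  forall k : 'I_n, tnth p k <= m.+1.

Definition Qset (m n i : nat) (p : n.-tuple nat) : Prop :=
  in_box m p /\ fn m n (fun k => nth 0 p k) = i.

Definition unit_step (n : nat) (p q : n.-tuple nat) : Prop :=
  exists k : 'I_n,
    (tnth q k = (tnth p k).+1 \/ tnth p k = (tnth q k).+1) /\
    (forall l : 'I_n, l != k -> tnth p l = tnth q l).

Definition adjacent (n : nat) (P Q : n.-tuple nat -> Prop) : Prop :=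
  exists p q, P p /\ Q q /\ unit_step p q.

From mathcomp Require Import all_boot.

(* The point (1, j, i, 0, ..., 0) lies in the interior block, where f reads off
   the third coordinate and gives i, while its neighbour (0, j, i, 0, ..., 0) lies
   on the wall x = 0, where f reads off the second coordinate and gives j.  All
   coordinates past the third are at most m, so f_n agrees with f_3 there. *)

Lemma fn_f3 (m n : nat) (x : nat -> nat) : 3 <= n ->
  (forall k, 3 <= k -> x k <= m) -> fn m n x = f3 m (x 0) (x 1) (x 2).
Proof.
move=> + xk_le; elim: n => [|[|[|[|n]]] IHn] //= _.
by rewrite xk_le //; apply: IHn.
Qed.

Lemma f3_inner (m x y z : nat) : 0 < x <= m.+1 -> 0 < y <= m.+1 -> 0 < z <= m ->
  f3 m x y z = z.
Proof.
case/andP=> x_gt0 x_le; case/andP=> y_gt0 y_le; case/andP=> z_gt0 z_le.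
rewrite /f3 x_gt0 y_gt0 z_gt0 x_le y_le z_le.
by rewrite (ltn_eqF (z_le : z < m.+1)) !gtn_eqF // !andbF.
Qed.

Lemma f3_wall (m y z : nat) : 0 < y <= m -> 0 < z <= m -> f3 m 0 y z = y.
Proof.
case/andP=> y_gt0 y_le; case/andP=> z_gt0 z_le.
by rewrite /f3 y_gt0 y_le z_gt0 z_le gtn_eqF.
Qed.

Definition pad3 (n a b c : nat) : n.+3.-tuple nat :=
  [tuple of a :: b :: c :: nseq n 0].

Lemma Qset_pad3 (m n a b c : nat) : a <= m.+1 -> b <= m.+1 -> c <= m.+1 ->
  Qset m (f3 m a b c) (pad3 n a b c).
Proof.
move=> a_le b_le c_le; split.
  by case=> [[|[|[|k]]] lt_k] //; rewrite (tnth_nth 0) //= nth_nseq if_same.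
by rewrite fn_f3 // => -[|[|[|k]]] //= _; rewrite nth_nseq if_same.
Qed.

Lemma unit_step_pad3 (n a b c : nat) : unit_step (pad3 n a.+1 b c) (pad3 n a b c).
Proof.
exists ord0; split; first by right; rewrite !(tnth_nth 0).
by case=> -[|l] lt_l ne_l0; rewrite !(tnth_nth 0).
Qed.

Theorem lemma5p3 (n m : nat) : 3 <= n -> 1 <= m ->
  forall i j : nat, 1 <= i -> i < j -> j <= m ->
    @adjacent n (@Qset m n i) (@Qset m n j).
Proof.
case: n => [|[|[|n]]] // _ _ i j i_gt0 lt_ij j_le.
have i_le : i <= m by rewrite (leq_trans (ltnW lt_ij)).
have j_gt0 : 0 < j by rewrite (leq_trans i_gt0 (ltnW lt_ij)).
have f_inner : f3 m 1 j i = i by rewrite f3_inner ?i_gt0 ?i_le ?j_gt0 ?(leqW j_le).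
have f_wall : f3 m 0 j i = j by rewrite f3_wall ?i_gt0 ?i_le ?j_gt0 ?j_le.
exists (pad3 n 1 j i), (pad3 n 0 j i); split; [|split; last exact: unit_step_pad3].
  by rewrite -[X in Qset _ X]f_inner; apply: Qset_pad3; rewrite // !leqW.
by rewrite -[X in Qset _ X]f_wall; apply: Qset_pad3; rewrite // !leqW.
Qed.
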